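(* Let $i\ge 7$ be an odd integer such that $(i+1)/2$ is even. Then for every $t\in\{1,\dots,\tfrac{i-3}{4}\}$, \[S(i)=\left\langle 2,\tfrac{i+1}{2}+2t+1\right\rangle\cap\bigcap_{k=t}^{(i-3)/4}T\!\left(\tfrac{i+1}{2}+2k+1\right),\] and this intersection is a factorization of $S(i)$ into irreducible numerical semigroups (i.e. it cannot be refined).
   Context: $\mathbb{N}$ denotes the non-negative integers. A numerical semigroup is a submonoid of $(\mathbb{N},+)$ with finite complement. A numerical semigroup is irreducible if it cannot be written as the intersection of two numerical semigroups properly containing it. $\langle a,b\rangle=\{xa+yb:x,y\in\mathbb{N}\}$; for $b$ odd, $\langle 2,b\rangle$ is irreducible. For an odd integer $j\ge 3$, $T(j)=\{0,\tfrac{j+1}{2},\tfrac{j+1}{2}+1,\dots,j-1\}\cup\{n\in\mathbb{Z}:n\ge j+1\}$; each $T(j)$ is an irreducible numerical semigroup. For odd $i\ge5$, $S(i)=\langle 2,i\rangle\cap T(i)$. Given a numerical semigroup $S$ and irreducible numerical semigroups $S_1,\dots,S_n$, the expression $S_1\cap\dots\cap S_n$ is a factorization of $S$ (of length $n$) if $S=S_1\cap\dots\cap S_n$ and $S\neq\bigcap_{j\in J}S_j$ for every nonempty proper subset $J\subsetneq\{1,\dots,n\}$. *)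

From mathcomp Require Import all_boot.
Set Implicit Arguments.
Unset Strict Implicit.
Unset Printing Implicit Defensive.

Definition nset := nat -> Prop.

Definition nset_eq (A B : nset) : Prop := forall n, A n <-> B n.

Definition nset_cap (A B : nset) : nset := fun n => A n /\ B n.

Definition numerical_semigroup (S : nset) : Prop :=
  S 0 /\ (forall a b, S a -> S b -> S (a + b)) /\
  (exists N, forall n, N <= n -> S n).

Definition irreducible_ns (S : nset) : Prop :=
  numerical_semigroup S /\
  ~ (exists S1 S2 : nset,
       numerical_semigroup S1 /\ numerical_semigroup S2 /\
       (forall n, S n -> S1 n) /\ ~ nset_eq S1 S /\
       (forall n, S n -> S2 n) /\ ~ nset_eq S2 S /\
       nset_eq S (nset_cap S1 S2)).

Definition gen2 (a b : nat) : nset := fun n => exists x y, n = x * a + y * b.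

Definition Tj (j : nat) : nset :=
  fun n => n = 0 \/ ((j + 1) %/ 2 <= n /\ n <= j - 1) \/ j + 1 <= n.

Definition Si (i : nat) : nset := nset_cap (gen2 2 i) (Tj i).

Definition big_cap (n : nat) (F : 'I_n -> nset) (J : {set 'I_n}) : nset :=
  fun x => forall j, j \in J -> F j x.

Definition is_factorization (S : nset) (n : nat) (F : 'I_n -> nset) : Prop :=
  numerical_semigroup S /\
  (forall j, irreducible_ns (F j)) /\
  nset_eq S (big_cap F setT) /\
  (forall J : {set 'I_n}, J != set0 -> J != setT -> ~ nset_eq S (big_cap F J)).

(* The family of the lemma, indexed by 'I_(m - t + 2) with m = (i-3)/4:
   index 0 is <2, (i+1)/2 + 2t + 1>, index j >= 1 is T((i+1)/2 + 2k + 1)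
   with k = t + j - 1, so k ranges over t..m. *)
Arguments big_cap : clear implicits.
Arguments big_cap {n} F J.
Definition lemma_family (i t : nat) : 'I_((i - 3) %/ 4 - t + 2) -> nset :=
  fun j => if val j == 0 then gen2 2 ((i + 1) %/ 2 + 2 * t + 1)
           else Tj ((i + 1) %/ 2 + 2 * (t + val j - 1) + 1).
Arguments lemma_family i t j : clear implicits.

(* S(i) with i = 4m+3 consists of 0, the even numbers from 2m+2 on and everything from 4m+5
   on; a direct computation shows it equals the given intersection. Both <2,b> (b odd) and
   T(j) are irreducible since every numerical semigroup properly containing them contains a
   fixed gap (b-2, resp. j). The intersection cannot be shortened because each member has a
   gap of S(i) lying in all the other members: 2m+3 for <2, 2m+2t+3>, and j itself for T(j). *)
From Stdlib Require Import Classical.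
From mathcomp Require Import all_boot.
From mathcomp Require Import zify.

Set Implicit Arguments.
Unset Strict Implicit.
Unset Printing Implicit Defensive.

Lemma gen2_2P b n : odd b -> gen2 2 b n <-> ~~ odd n \/ b <= n.
Proof.
move=> ob; split.
- case=> x [[|y] ->]; first by left; lia.
  by right; rewrite mulSn; lia.
- case on: (odd n) => H.
  + by exists ((n - b) %/ 2), 1; move: H on; lia.
  + by exists (n %/ 2), 0; lia.
Qed.

Lemma numerical_semigroup_cap A B :
  numerical_semigroup A -> numerical_semigroup B -> numerical_semigroup (nset_cap A B).
Proof.
move=> [A0 [AD [N1 AN]]] [B0 [BD [N2 BN]]]; split; first by [].
split; first by move=> a b [? ?] [? ?]; split; auto.
by exists (N1 + N2) => n Nn; split; [apply: AN | apply: BN]; lia.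
Qed.

Lemma numerical_semigroup_gen2 b : odd b -> numerical_semigroup (gen2 2 b).
Proof.
move=> ob; split; first by exists 0, 0.
split; last by exists b => n bn; apply/gen2_2P => //; right.
move=> a c [x1 [y1 ->]] [x2 [y2 ->]]; exists (x1 + x2), (y1 + y2); lia.
Qed.

Lemma numerical_semigroup_Tj j : odd j -> numerical_semigroup (Tj j).
Proof.
move=> oj; split; first by left.
split; last by exists (j + 1) => n jn; right; right.
by rewrite /Tj => a c; lia.
Qed.

Lemma numerical_semigroup_addMn (S : nset) x y k :
  numerical_semigroup S -> S x -> S y -> S (x + k * y).
Proof.
move=> [_ [SD _]] Sx Sy; elim: k => [|k IH]; first by rewrite addn0.
by rewrite mulSn addnCA addnC; apply: SD.
Qed.

Lemma nset_proper_ex (S S' : nset) :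
  (forall n, S n -> S' n) -> ~ nset_eq S' S -> exists x, S' x /\ ~ S x.
Proof.
move=> SS' neq; apply: NNPP => noex; apply: neq => n; split; last exact: SS'.
by move=> S'n; apply: NNPP => Sn; apply: noex; exists n.
Qed.

Lemma irreducible_ns_gap (S : nset) g :
  numerical_semigroup S -> ~ S g ->
  (forall S', numerical_semigroup S' -> (forall n, S n -> S' n) ->
              ~ nset_eq S' S -> S' g) ->
  irreducible_ns S.
Proof.
move=> nsS Sg above; split; first by [].
case=> S1 [S2 [ns1 [ns2 [sub1 [neq1 [sub2 [neq2 eqS]]]]]]].
by apply: Sg; apply/eqS; split; apply: above.
Qed.

Lemma irreducible_gen2 b : odd b -> 3 <= b -> irreducible_ns (gen2 2 b).
Proof.
move=> ob b3; apply: (@irreducible_ns_gap _ (b - 2)).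
- exact: numerical_semigroup_gen2.
- by move/(gen2_2P _ ob); lia.
move=> S nsS sub neq; have [x [Sx notx]] := nset_proper_ex sub neq.
have [ox xb] : odd x /\ x < b.
  by move: notx; rewrite (gen2_2P _ ob); lia.
have S2 : S 2 by apply: sub; exists 1, 0.
have := numerical_semigroup_addMn ((b - 2 - x) %/ 2) nsS Sx S2.
by have -> : x + (b - 2 - x) %/ 2 * 2 = b - 2 by lia.
Qed.

(* A proper oversemigroup of T(j) contains some x < (j+1)/2; then j - x lies in T(j). *)
Lemma irreducible_Tj j : odd j -> 3 <= j -> irreducible_ns (Tj j).
Proof.
move=> oj j3; apply: (@irreducible_ns_gap _ j).
- exact: numerical_semigroup_Tj.
- by rewrite /Tj; lia.
move=> S [_ [SD _]] sub neq; have [x [Sx notx]] := nset_proper_ex sub neq.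
have [<- // | xj] := eqVneq x j.
have Sjx : S (j - x) by apply: sub; move: notx xj; rewrite /Tj; lia.
by have := SD _ _ Sx Sjx; have -> : x + (j - x) = j by move: notx; rewrite /Tj; lia.
Qed.

Lemma big_cap_proper_neq n (F : 'I_n -> nset) (S : nset) (gap : 'I_n -> nat) :
  (forall j, ~ S (gap j)) -> (forall j j', j' != j -> F j' (gap j)) ->
  forall J, J != setT -> ~ nset_eq S (big_cap F J).
Proof.
move=> Sgap Fgap J; rewrite -subTset => /subsetPn[j _ jJ] eqS.
apply: (Sgap j); apply/eqS => j' j'J; apply: Fgap.
by apply: contraNneq jJ => <-.
Qed.

Lemma lemma_family_setT i t : t <= (i - 3) %/ 4 ->
  nset_eq (big_cap (lemma_family i t) setT)
    (nset_cap (gen2 2 ((i + 1) %/ 2 + 2 * t + 1))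
              (fun n => forall k, t <= k <= (i - 3) %/ 4 ->
                          Tj ((i + 1) %/ 2 + 2 * k + 1) n)).
Proof.
move=> tM n; split.
- move=> Fn; have M0 : 0 < (i - 3) %/ 4 - t + 2 by lia.
  split; first by have := Fn (Ordinal M0) (in_setT _).
  move=> k tk; have kM : k - t + 1 < (i - 3) %/ 4 - t + 2 by lia.
  have := Fn (Ordinal kM) (in_setT _); rewrite /lemma_family /=.
  have -> : (k - t + 1 == 0) = false by lia.
  by have -> : t + (k - t + 1) - 1 = k by lia.
- case=> an Tn [j jM] _; rewrite /lemma_family /=.
  by case: eqP => // j0; apply: Tn; lia.
Qed.

Lemma SiP i m n : i = 4 * m + 3 ->
  Si i n <-> n = 0 \/ (~~ odd n /\ 2 * m + 2 <= n) \/ 4 * m + 5 <= n.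
Proof.
move=> im; have oi : odd i by rewrite im; lia.
rewrite /Si /nset_cap (gen2_2P _ oi) /Tj im; lia.
Qed.

Section LemmaFamily.

Variables i m t : nat.
Hypothesis im : i = 4 * m + 3.
Hypothesis t1 : 1 <= t.
Hypothesis tm : t <= m.

Lemma Si_eq_cap :
  nset_eq (Si i)
    (nset_cap (gen2 2 ((i + 1) %/ 2 + 2 * t + 1))
              (fun n => forall k, t <= k <= (i - 3) %/ 4 ->
                          Tj ((i + 1) %/ 2 + 2 * k + 1) n)).
Proof.
have oa : odd ((i + 1) %/ 2 + 2 * t + 1) by rewrite im; lia.
move=> n; rewrite (SiP _ im) /nset_cap (gen2_2P _ oa) /Tj im; split.
- by move=> Hn; split; [lia | move=> k; lia].
- move=> [an Tn]; have := Tn m; have := Tn ((n - 2 * m - 3) %/ 2); lia.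
Qed.

Definition family_gap (j : nat) : nat :=
  if j == 0 then 2 * m + 3 else 2 * m + 2 * (t + j) + 1.

Lemma Si_family_gap j : j < (i - 3) %/ 4 - t + 2 -> ~ Si i (family_gap j).
Proof. by rewrite (SiP _ im) /family_gap im; case: eqP; lia. Qed.

Lemma lemma_family_gap (j j' : 'I_((i - 3) %/ 4 - t + 2)) :
  j' != j -> lemma_family i t j' (family_gap j).
Proof.
move: j j' => [j jM] [j' j'M]; rewrite -val_eqE /= /lemma_family /family_gap /= => jj'.
have [j'0 | j'0] := eqVneq j' 0; have [j0 | j0] := eqVneq j 0.
- by move: jj'; rewrite j0 j'0.
- by apply/gen2_2P; rewrite im; lia.
- by rewrite /Tj im; lia.
- by move: jj' j'0 j0; rewrite /Tj im; lia.
Qed.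

End LemmaFamily.

Theorem lemma2p3 (i t : nat) :
  odd i -> 7 <= i -> ~~ odd ((i + 1) %/ 2) ->
  1 <= t -> t <= (i - 3) %/ 4 ->
  nset_eq (Si i)
    (nset_cap (gen2 2 ((i + 1) %/ 2 + 2 * t + 1))
              (fun n => forall k, t <= k <= (i - 3) %/ 4 ->
                          Tj ((i + 1) %/ 2 + 2 * k + 1) n))
  /\ is_factorization (Si i) (lemma_family i t).
Proof.
move=> oi i7 eh t1 tM; set m := (i - 3) %/ 4 in tM.
have im : i = 4 * m + 3 by rewrite /m; lia.
have hm : (i + 1) %/ 2 = 2 * m + 2 by rewrite im; lia.
have eqS := Si_eq_cap im t1 tM.
split=> //; split.
  by apply: numerical_semigroup_cap;
    [apply: numerical_semigroup_gen2 | apply: numerical_semigroup_Tj].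
split.
  move=> j; rewrite /lemma_family; case: eqP => _.
  - by apply: irreducible_gen2; rewrite hm; lia.
  - by apply: irreducible_Tj; rewrite hm; lia.
split.
  by move=> n; rewrite eqS; symmetry; apply: lemma_family_setT.
move=> J _; apply: (@big_cap_proper_neq _ _ _ (fun j => family_gap m t (val j))).
- by move=> [j jM]; apply: (Si_family_gap im t1 tM jM).
- exact: lemma_family_gap im t1 tM.
Qed.
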